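(* Let $\Phi_{usc}=\{(X,f):\,X\subseteq\mathbb{R}^d\text{ closed},\ f:X\rightarrow\overline{\mathbb{R}}\text{ upper semi-continuous}\}$, topologized via the bijection $\tau:(X,f)\mapsto\{(x,t)\in X\times\overline{\mathbb{R}}:\,t\leq f(x)\}$ onto the family $\mathcal{U}_{cl}$ of closed sets $A\subseteq\mathbb{R}^d\times\overline{\mathbb{R}}$ satisfying: for all $x\in\mathbb{R}^d$ and $t\in\overline{\mathbb{R}}$, $(x,t)\in A$ implies $\{x\}\times[-\infty,t]\subseteq A$. Then $\Phi_{usc}$ is compact in the topology induced by $\mathcal{U}_{cl}$.
   Context: $\overline{\mathbb{R}}=[-\infty,\infty]$ is the extended real line. $\mathcal{U}_{cl}$ carries the topology it inherits as a subspace of the space $\mathcal{F}(\mathbb{R}^d\times\overline{\mathbb{R}})$ of all closed subsets of $\mathbb{R}^d\times\overline{\mathbb{R}}$ equipped with the Fell (hit-or-miss) topology; $\Phi_{usc}$ carries the topology making $\tau$ a homeomorphism. *)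

From HB Require Import structures.
From mathcomp Require Import all_boot all_order all_algebra.
From mathcomp Require Import all_classical all_reals all_analysis.
Set Implicit Arguments. Unset Strict Implicit. Unset Printing Implicit Defensive.
Import Order.TTheory GRing.Theory Num.Theory numFieldNormedType.Exports.
Local Open Scope classical_set_scope.
Local Open Scope ring_scope.

(** The space F(T) of (closed) subsets of a topological space T with the
    Fell (hit-or-miss) topology, generated by the subbase
      F^K = {F | F ∩ K = ∅}  (K compact)   and   F_G = {F | F ∩ G ≠ ∅} (G open).
    We put this topology on the type of all subsets of T; the space F(T) of
    closed sets, and U_cl, carry the subspace topology, and compactness of a
    subset is the same whether computed in F(T) or in this ambient space. *)
Definition fell_space (T : Type) : Type := set T.

Section Fell.
Variable T : topologicalType.

Definition fell_subbase : set (set (set T)) :=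
  [set M | (exists K : set T, compact K /\ M = [set F | F `&` K = set0])
        \/ (exists G : set T, open G /\ M = [set F | F `&` G !=set0])].

HB.instance Definition _ := Choice.on (fell_space T).
HB.instance Definition _ :=
  @isSubBaseTopological.Build (fell_space T) (set (set T)) fell_subbase id.
End Fell.

Notation Ecyl R d := ('rV[R]_d * \bar R)%type.

(** upper semicontinuity of f : X -> \bar R (f given on the whole space,
    only its values on X matter) *)
Definition usc_on (R : realType) (d : nat) (X : set 'rV[R]_d)
  (f : 'rV[R]_d -> \bar R) : Prop :=
  forall x, X x -> forall t : \bar R, (f x < t)%E ->
    \forall y \near x, X y -> (f y < t)%E.

Definition Phi_usc (R : realType) (d : nat) :
  set (set 'rV[R]_d * ('rV[R]_d -> \bar R)) :=
  [set p | closed p.1 /\ usc_on p.1 p.2].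

Definition tau (R : realType) (d : nat)
  (p : set 'rV[R]_d * ('rV[R]_d -> \bar R)) : fell_space (Ecyl R d) :=
  [set z : Ecyl R d | p.1 z.1 /\ (z.2 <= p.2 z.1)%E].

Definition U_cl (R : realType) (d : nat) : set (fell_space (Ecyl R d)) :=
  [set A | closed (A : set (Ecyl R d)) /\
     forall (x : 'rV[R]_d) (t s : \bar R), A (x, t) -> (s <= t)%E -> A (x, s)].

From HB Require Import structures.
From mathcomp Require Import all_boot all_order all_algebra.
From mathcomp Require Import all_classical all_reals all_analysis.
Import Order.TTheory GRing.Theory Num.Theory numFieldNormedType.Exports.
Local Open Scope classical_set_scope.
Local Open Scope ring_scope.
Set Implicit Arguments. Unset Strict Implicit.

(* Compactness is checked on ultrafilters. An ultrafilter U on the Fell space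
   converges to its limit set, the points every neighbourhood of which is hit
   by U-almost every member; this set is closed, and it inherits from the
   hypographs the downward closure in the extended-real coordinate. Finally
   every closed downward closed set A is the hypograph of the usc function
   x |-> sup {t | (x, t) in A} on the closed set {x | (x, -oo) in A}. *)

Section FellLimit.
Variable T : topologicalType.

Lemma fell_subbase_cvg (F : set_system (fell_space T)) (A : fell_space T) :
  Filter F -> (forall M, fell_subbase M -> M A -> F M) -> F --> A.
Proof.
move=> FF sub P /=; rewrite nbhsE => -[B [[D' sD' eB] BA sBP]].
apply: (filterS sBP); move: BA; rewrite -eB => -[M DM MA].
have [E sE eM] := sD' M DM.
apply: (@filterS _ F _ M); first by move=> z Mz; exists M.
rewrite -eM; apply: filter_bigI => i iE.
apply: sub; first exact: set_mem (sE i iE).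
by move: MA; rewrite -eM; apply.
Qed.

Definition fell_lim (U : set_system (fell_space T)) : set T :=
  [set z | forall G, nbhs z G -> U [set F : fell_space T | F `&` G !=set0]].

Lemma closed_fell_lim U : Filter U -> closed (fell_lim U).
Proof.
move=> UF z zcl G; rewrite nbhsE => -[B [oB Bz] sBG].
have [z' [limz' Bz']] := zcl B (open_nbhs_nbhs (conj oB Bz)).
apply: filterS (limz' B (open_nbhs_nbhs (conj oB Bz'))).
by move=> F [w [Fw Bw]]; exists w; split => //; apply: sBG.
Qed.

Lemma fell_lim_cvg U : UltraFilter U -> U --> (fell_lim U : fell_space T).
Proof.
move=> UU; have UF : Filter U by case: UU => -[].
apply: fell_subbase_cvg => M [[K [cK ->]]|[G [oG ->]]] limK.
- have Umiss : U [set F : fell_space T | K `<=` ~` F].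
    move/compact_near_coveringP: cK; apply => // z Kz.
    have [G [Gz notUG]] : exists G, nbhs z G /\
        ~ U [set F : fell_space T | F `&` G !=set0].
      apply: contrapT => allG; suff : (fell_lim U `&` K) z by rewrite limK.
      split=> // G Gz; apply: contrapT => notUG; apply: allG; by exists G.
    have [//|UmissG] := in_ultra_setVsetC
      [set F : fell_space T | F `&` G !=set0] UU.
    exists (G, ~` [set F : fell_space T | F `&` G !=set0]) => //=.
    by move=> -[z' F'] [/= Gz' missF] F'z'; apply: missF; exists z'.
  apply: filterS Umiss => F FK.
  by apply/eqP/negPn/negP => /set0P[w [Fw Kw]]; exact: FK w Kw Fw.
- by case: limK => z [limz Gz]; exact: limz G (open_nbhs_nbhs (conj oG Gz)).
Qed.

End FellLimit.

Lemma nbhs_ereal_lt (R : realType) (a : \bar R) (V : set (\bar R)) :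
  nbhs a V -> a != -oo%E -> exists2 s, (s < a)%E & V s.
Proof.
case: a => [r| |] // Va _.
- move/nbhs_EFin: Va => Vr.
  have : \forall y \near r^'-, V y%:E /\ y < r.
    near=> y; split; last by near: y; exact: nbhs_left_lt.
    by near: y; exact: cvg_within.
  case/(filter_ex (F := r^'-)) => y [Vy yr].
  by exists y%:E; rewrite ?lte_fin.
- case/nbhs_ereal_pinfty: Va => _ /filter_ex[y Vy].
  by exists y%:E; rewrite ?ltry.
Unshelve. all: end_near.
Qed.

Section Hypograph.
Variables (R : realType) (d : nat).
Implicit Types (A : set (Ecyl R d)) (x : 'rV[R]_d) (t : \bar R).

Lemma nbhs_Ecyl_rect x t (W : set (Ecyl R d)) : nbhs (x, t) W ->
  exists B V, [/\ nbhs x B, nbhs t V & forall y s, B y -> V s -> W (y, s)].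
Proof. by case=> -[B V] /= [Bx Vt] sub; exists B, V; split=> // y s *; apply: sub. Qed.

Definition down_closed A := forall x t s, A (x, t) -> (s <= t)%E -> A (x, s).

Lemma tau_down_closed p : down_closed (tau p).
Proof. by move=> x t s [/= Xx tf] st; split=> //=; apply: le_trans tf. Qed.

Lemma fell_lim_down_closed (U : set_system (fell_space (Ecyl R d))) :
  Filter U -> U [set F : fell_space (Ecyl R d) | down_closed F] ->
  down_closed (fell_lim U).
Proof.
move=> UF Udown x t s limxt; rewrite le_eqVlt => /orP[/eqP -> //|st] G.
case/nbhs_Ecyl_rect => B [V [Bx Vs BVG]].
have nbhs_above : nbhs (x, t) [set z : Ecyl R d | B z.1 /\ (s < z.2)%E].
  exists (B, [set r | (s < r)%E]) => [/=|[y r] []//].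
  by split=> //; apply: open_ereal_gt'.
apply: filterS (filterI (limxt _ nbhs_above) Udown).
move=> F [[[y r] [Fyr [By sr]]] downF]; exists (y, s); split.
  exact: downF Fyr (ltW sr).
exact: BVG (nbhs_singleton Vs).
Qed.

Definition hypo_dom A : set 'rV[R]_d := [set x | A (x, -oo%E)].
Definition hypo_sup A x : \bar R := ereal_sup [set t | A (x, t)].

Variable A : set (Ecyl R d).
Hypotheses (A_closed : closed A) (A_down : down_closed A).

Lemma hypo_sup_mem x : hypo_dom A x -> A (x, hypo_sup A x).
Proof.
move=> Ax; have [->//|supNy] := eqVneq (hypo_sup A x) -oo%E.
apply: A_closed => W /nbhs_Ecyl_rect[B [V [Bx Vsup BVW]]].
have [s ssup Vs] := nbhs_ereal_lt Vsup supNy.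
have [r Axr sr] := ereal_sup_gt ssup.
by exists (x, s); split; [exact: A_down Axr (ltW sr)|exact: BVW (nbhs_singleton Bx) Vs].
Qed.

Lemma tau_hypo : tau (hypo_dom A, hypo_sup A) = A.
Proof.
apply/seteqP; split => -[x t] /=.
- by case=> /= Ax tsup; exact: A_down (hypo_sup_mem Ax) tsup.
- by move=> Axt; split; [exact: A_down Axt (leNye t)|exact: ereal_sup_ubound].
Qed.

Lemma closed_hypo_dom : closed (hypo_dom A).
Proof.
move=> x xcl; apply: A_closed => W /nbhs_Ecyl_rect[B [V [Bx Vt BVW]]].
have [y [Ay By]] := xcl B Bx.
by exists (y, -oo%E); split=> //; exact: BVW By (nbhs_singleton Vt).
Qed.

Lemma hypo_sup_usc : usc_on (hypo_dom A) (hypo_sup A).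
Proof.
move=> x _ t supt.
have notAxt : ~ A (x, t).
  by move=> Axt; move: supt; rewrite ltNge ereal_sup_ubound.
have /nbhs_Ecyl_rect[B [V [Bx Vt BVW]]] : nbhs (x, t) (~` A).
  by apply: open_nbhs_nbhs; split=> //; exact: closed_openC.
apply: filterS Bx => y By Ay; rewrite ltNge; apply/negP => tsup.
exact: BVW By (nbhs_singleton Vt) (A_down (hypo_sup_mem Ay) tsup).
Qed.

End Hypograph.

Lemma U_cl_sub_tau_Phi_usc (R : realType) (d : nat) :
  U_cl (R:=R) (d:=d) `<=` tau (d:=d) @` Phi_usc (R:=R) (d:=d).
Proof.
move=> A [Acl Adown]; exists (hypo_dom A, hypo_sup A); last exact: tau_hypo.
by split; [exact: closed_hypo_dom|exact: hypo_sup_usc].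
Qed.

Unset Implicit Arguments.
Local Close Scope ring_scope.
Theorem proposition2p1 (R : realType) (d : nat) :
  @compact (fell_space (Ecyl R d)) (tau (d:=d) @` Phi_usc (R:=R) (d:=d)).
Proof.
rewrite compact_ultra => U UU Utau.
have UF : Filter U by case: UU => -[].
have Udown : U [set F : fell_space (Ecyl R d) | down_closed F].
  by apply: filterS Utau => _ [p _ <-]; exact: tau_down_closed.
have limU : U_cl (fell_lim U).
  exact: conj (closed_fell_lim UF) (fell_lim_down_closed UF Udown).
exists (fell_lim U); split; last exact: fell_lim_cvg.
exact: U_cl_sub_tau_Phi_usc limU.
Qed.
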